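(* Consider the packet spreading algorithm described in the context with any $N\ge 2$. For every iteration $k\in\{0,1,\dots,K-1\}$, letting $i=m_k$ be the source selected in iteration $k$, we have for every source $j\neq i$ $$\tilde Q_j^{k+1}=\frac{x_j^k+1}{K_j}-\frac{x_i^k}{K_i}.$$
   Context: Packet spreading algorithm: Let $N\ge 2$, let $K_1,\dots,K_N$ be positive integers and $K=\sum_{n=1}^N K_n$. The algorithm runs iterations $k=0,1,\dots,K-1$ and maintains deficit counters $B_n^k$, $1\le n\le N$, with $B_n^0=0$ for all $n$. In iteration $k$, define the quantums $Q_n^k=\frac{(1-B_n^k)K}{K_n}$; select a source $m_k\in\arg\min_{1\le n\le N} Q_n^k$ (ties broken arbitrarily); let $Q=Q_{m_k}^k$; set $B_n^{k+1}=B_n^k+Q\frac{K_n}{K}$ for $n\neq m_k$ and $B_{m_k}^{k+1}=0$; and set the $k$-th entry of the output pattern to $P(k)=m_k$. Normalized quantums: $\tilde Q_n^k=Q_n^k/K=(1-B_n^k)/K_n$. For $0\le k\le K-1$, $x_n^k$ denotes the number of indices $k'\in\{0,\dots,k\}$ with $m_{k'}=n$, i.e. the number of source-$n$ instances inserted into the pattern after iteration $k$. *)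

From HB Require Import structures.
From mathcomp Require Import all_boot all_order all_algebra.
Set Implicit Arguments. Unset Strict Implicit. Unset Printing Implicit Defensive.
Import Order.TTheory GRing.Theory Num.Theory.
Local Open Scope ring_scope.

Section PacketSpreading.
Variables (R : realFieldType) (N : nat) (Kn : 'I_N -> nat).

Definition Ktot : nat := (\sum_(n < N) Kn n)%N.

Definition quantum (b : R) (n : 'I_N) : R := (1 - b) * (Ktot%:R) / (Kn n)%:R.

(* Deficit counters B^k along a run with selected sources m : nat -> 'I_N
   (m k is the source selected in iteration k). *)
Fixpoint deficit (m : nat -> 'I_N) (k : nat) : 'I_N -> R :=
  match k with
  | 0 => fun _ => 0
  | k'.+1 => fun n =>
      let Bk := deficit m k' in
      let Q := quantum (Bk (m k')) (m k') in
      if n == m k' then 0 else Bk n + Q * (Kn n)%:R / (Ktot%:R)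
  end.

Definition Qk (m : nat -> 'I_N) (k : nat) (n : 'I_N) : R :=
  quantum (deficit m k n) n.

Definition Qtilde (m : nat -> 'I_N) (k : nat) (n : 'I_N) : R :=
  Qk m k n / (Ktot%:R).

Definition xcount (m : nat -> 'I_N) (k : nat) (n : 'I_N) : nat :=
  count (fun k' => m k' == n) (iota 0 k.+1).

Definition valid_run (m : nat -> 'I_N) : Prop :=
  forall k, (k < Ktot)%N -> forall n : 'I_N, Qk m k (m k) <= Qk m k n.

End PacketSpreading.

(* In normalized form the update reads ~Q_n^{k+1} = ~Q_n^k - ~Q_{m_k}^k for n <> m_k
   and ~Q_{m_k}^{k+1} = 1/K_{m_k}: every unselected quantum drops by the quantum of
   the selected source, and the selected one restarts at 1/K_{m_k}.  Induction on k
   then shows ~Q_n^{k+1} = (x_n^k + 1)/K_n - x_{m_k}^k/K_{m_k} for every source n. *)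
From HB Require Import structures.
From mathcomp Require Import all_boot all_order all_algebra.
From mathcomp Require Import ring.
Import Order.TTheory GRing.Theory Num.Theory.
Local Open Scope ring_scope.

Lemma xcount0 N (m : nat -> 'I_N) n : xcount m 0 n = (m 0%N == n) :> nat.
Proof. by rewrite /xcount /= addn0. Qed.

Lemma xcountS N (m : nat -> 'I_N) k n :
  xcount m k.+1 n = (xcount m k n + (m k.+1 == n))%N.
Proof. by rewrite /xcount -addn1 iotaD count_cat /= addn0. Qed.

Section NormalizedQuantum.
Variables (R : realFieldType) (N : nat) (Kn : 'I_N -> nat) (m : nat -> 'I_N).
Hypothesis Kn_gt0 : forall n, (0 < Kn n)%N.
Hypothesis Ktot_gt0 : (0 < Ktot Kn)%N.

Local Notation Qt := (Qtilde R Kn m).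
Local Notation K_ n := ((Kn n)%:R : R).

Lemma Kn_neq0 n : K_ n != 0.
Proof. by rewrite pnatr_eq0 -lt0n. Qed.

Lemma Ktot_neq0 : (Ktot Kn)%:R != 0 :> R.
Proof. by rewrite pnatr_eq0 -lt0n. Qed.

Lemma Qtilde_deficit k n : Qt k n = (1 - deficit R Kn m k n) / K_ n.
Proof.
rewrite /Qtilde /Qk /quantum; move: (Kn_neq0 n) Ktot_neq0 => ? ?.
by field; apply/andP.
Qed.

Lemma Qtilde0 n : Qt 0 n = (K_ n)^-1.
Proof. by rewrite Qtilde_deficit subr0 div1r. Qed.

Lemma Qtilde_selected k : Qt k.+1 (m k) = (K_ (m k))^-1.
Proof. by rewrite Qtilde_deficit /= eqxx subr0 div1r. Qed.

Lemma Qtilde_unselected k n : n != m k -> Qt k.+1 n = Qt k n - Qt k (m k).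
Proof.
move=> /negbTE ne; rewrite !Qtilde_deficit /= ne /quantum.
move: (Kn_neq0 n) (Kn_neq0 (m k)) Ktot_neq0 => ? ? ?.
by field; apply/and3P.
Qed.

Lemma Qtilde_xcount k n :
  Qt k.+1 n = (xcount m k n + 1)%:R / K_ n - (xcount m k (m k))%:R / K_ (m k).
Proof.
have restart c i : (K_ i)^-1 = (c + 1)%:R / K_ i - c%:R / K_ i.
  by rewrite -mulrBl natrD addrAC subrr add0r div1r.
elim: k n => [|k IH] n.
  have [->|ne] := eqVneq n (m 0%N); first by rewrite Qtilde_selected xcount0 eqxx -restart.
  rewrite Qtilde_unselected // !Qtilde0 xcount0 eq_sym (negbTE ne) xcount0 eqxx.
  by rewrite !div1r.
have [->|ne] := eqVneq n (m k.+1); first by rewrite Qtilde_selected -restart.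
rewrite Qtilde_unselected // !IH !xcountS eq_sym (negbTE ne) eqxx addn0 addn1.
by rewrite opprB addrA subrK.
Qed.

End NormalizedQuantum.

Theorem mainTheorem4 (R : realFieldType) (N : nat) (HN : (2 <= N)%N)
    (Kn : 'I_N -> nat) (HKpos : forall n, (0 < Kn n)%N)
    (m : nat -> 'I_N) (Hrun : valid_run R Kn m)
    (k : nat) (hk : (k < Ktot Kn)%N) (j : 'I_N) (hj : j != m k) :
  Qtilde R Kn m k.+1 j =
    (xcount m k j + 1)%:R / (Kn j)%:R - (xcount m k (m k))%:R / (Kn (m k))%:R.
Proof. by apply: Qtilde_xcount => //; apply: leq_ltn_trans hk. Qed.
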